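(* For every $\alpha\in(0,\pi/2]$, the system of two equations in the real unknowns $(d,u_1)$ $$3(1+\cos\alpha)d^2+8\cos\Big(\frac{\alpha}{2}\Big)d\,u_1+6u_1^2-10(1+\alpha\csc\alpha)=0,$$ $$4d^6-24d^4+57d^2-12\sec\Big(\frac{\alpha}{2}\Big)d(d^2-3)u_1+9\sec^2\Big(\frac{\alpha}{2}\Big)u_1^2+105\csc^2\Big(\frac{\alpha}{2}\Big)\big(1-\alpha\csc\alpha\big)=0$$ has at least two real solutions with $d>0$.
   Context: Here $\csc=1/\sin$ and $\sec=1/\cos$. The system describes (in the symmetric case $u_1=u_2$, $v_2=-v_1$) the degree-7 Pythagorean-hodograph curves interpolating the end points, tangent directions, curvatures and arc length of a circular arc of inner angle $2\alpha$ in canonical position. *)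

From Stdlib Require Import Reals.
Open Scope R_scope.

Definition csc (x : R) : R := / sin x.
Definition sec (x : R) : R := / cos x.

Definition eq1 (alpha d u1 : R) : R :=
  3 * (1 + cos alpha) * d ^ 2 + 8 * cos (alpha / 2) * d * u1 + 6 * u1 ^ 2
  - 10 * (1 + alpha * csc alpha).

Definition eq2 (alpha d u1 : R) : R :=
  4 * d ^ 6 - 24 * d ^ 4 + 57 * d ^ 2
  - 12 * sec (alpha / 2) * d * (d ^ 2 - 3) * u1
  + 9 * (sec (alpha / 2)) ^ 2 * u1 ^ 2
  + 105 * (csc (alpha / 2)) ^ 2 * (1 - alpha * csc alpha).

Definition is_solution (alpha d u1 : R) : Prop :=
  eq1 alpha d u1 = 0 /\ eq2 alpha d u1 = 0.

From Stdlib Require Import Factorial Reals Lra Psatz.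
Open Scope R_scope.

(* Write s = sin(alpha/2), c = cos(alpha/2), e = alpha/sin alpha - 1 and
   u1 = c v.  The second equation says that (w, d), with w = 3v - 2d(d^2-3),
   lies on the ellipse w^2 + 21 d^2 = 21 z^2, z^2 = 5e/s^2; the first says
   6d^2 + 8dv + 6v^2 = 10(2+e)/c^2.  On the rational parametrization
   d = 2zt/(1+t^2), w = -sqrt 21 z (1-t^2)/(1+t^2), t in [0,1], of the arc with
   d >= 0 >= w, the quadratic form exceeds 10(2+e)/c^2 at t = 0 and t = 1 but
   not at t = 53/100, so the intermediate value theorem gives two solutions,
   with distinct d > 0 since d increases with t.  The sign conditions follow
   from the Taylor estimate 2s^2/3 + 2s^4/5 <= e <= 6s^2/5. *)

Lemma INR_fact_S n : INR (fact (S n)) = INR (S n) * INR (fact n).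
Proof. rewrite fact_simpl, mult_INR; reflexivity. Qed.

Ltac expand_taylor_sum :=
  cbn [sum_f_R0 Nat.mul Nat.add]; repeat rewrite INR_fact_S; simpl INR; simpl pow;
  field.

Lemma sin_lb_expand a : sin_lb a = a - a^3/6 + a^5/120 - a^7/5040.
Proof. unfold sin_lb, sin_approx, sin_term; expand_taylor_sum. Qed.

Lemma sin_ub_expand a :
  sin_ub a = a - a^3/6 + a^5/120 - a^7/5040 + a^9/362880.
Proof. unfold sin_ub, sin_approx, sin_term; expand_taylor_sum. Qed.

Lemma cos_lb_expand a : cos_lb a = 1 - a^2/2 + a^4/24 - a^6/720.
Proof. unfold cos_lb, cos_approx, cos_term; expand_taylor_sum. Qed.

Lemma cos_ub_expand a :
  cos_ub a = 1 - a^2/2 + a^4/24 - a^6/720 + a^8/40320.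
Proof. unfold cos_ub, cos_approx, cos_term; expand_taylor_sum. Qed.

Lemma sin_taylor_bounds x : 0 <= x <= PI ->
  x - x^3/6 + x^5/120 - x^7/5040 <= sin x <= x - x^3/6 + x^5/120.
Proof.
  intros [x0 xpi]; destruct (SIN x x0 xpi) as [lb ub].
  rewrite sin_lb_expand in lb; rewrite sin_ub_expand in ub.
  assert (x^9/362880 <= x^7/5040).
  { assert (0 <= x^7) by (apply pow_le; lra).
    replace (x^9) with (x^7 * x^2) by ring.
    pose proof PI_4.
    assert (x^2 <= 16) by nra. nra. }
  lra.
Qed.

Lemma cos_taylor_bounds x : -PI/2 <= x <= PI/2 ->
  1 - x^2/2 + x^4/24 - x^6/720 <= cos x <=
  1 - x^2/2 + x^4/24 - x^6/720 + x^8/40320.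
Proof.
  intros [lo hi]; destruct (COS x lo hi) as [lb ub].
  rewrite cos_lb_expand in lb; rewrite cos_ub_expand in ub; lra.
Qed.

(* The degree-8 Taylor bound of cos is negative for 5/2 < x^2 <= 4. *)
Lemma sqr_le_of_le_half_pi x : 0 <= x <= PI/2 -> x^2 <= 5/2.
Proof.
  intros [x0 xpi].
  pose proof PI_4.
  assert (cos_ge0 : 0 <= cos x) by (apply cos_ge_0; lra).
  destruct (cos_taylor_bounds x ltac:(lra)) as [_ ub].
  destruct (Rle_or_lt (x^2) (5/2)) as [le|gt]; [exact le|exfalso].
  set (y := x^2) in *.
  assert (y <= 4) by (unfold y; nra).
  replace (x^4) with (y^2) in ub by (unfold y; ring).
  replace (x^6) with (y^3) in ub by (unfold y; ring).
  replace (x^8) with (y^4) in ub by (unfold y; ring).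
  nra.
Qed.

Lemma sin_mul_one_sub_cos_le_sub_sin x : 0 < x <= PI/2 ->
  sin x * (1 - cos x)/3 + sin x * (1 - cos x)^2/10 <= x - sin x.
Proof.
  intros [x0 xpi].
  pose proof PI_4.
  assert (x2 := sqr_le_of_le_half_pi x ltac:(lra)).
  destruct (sin_taylor_bounds x ltac:(lra)) as [_ sin_ub].
  destruct (cos_taylor_bounds x ltac:(lra)) as [cos_lb _].
  assert (sin_pos : 0 < sin x) by (apply sin_gt_0; lra).
  assert (one_sub_cos_ge0 : 1 - cos x >= 0) by (pose proof (COS_bound x); lra).
  set (s := x - x^3/6 + x^5/120) in *.
  set (g := x^2/2 - x^4/24 + x^6/720).
  assert (cos_g : 1 - cos x <= g) by (unfold g; lra).
  assert (sin x * ((1 - cos x)/3 + (1 - cos x)^2/10) <= s * (g/3 + g^2/10)).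
  { apply Rmult_le_compat; nra. }
  set (y := x^2) in *.
  assert (y0 : 0 <= y) by (unfold y; nra).
  assert (margin : 0 < 1/120 + y/240 - 53*y^2/51840 + 49*y^3/518400
                     - 49*y^4/10368000 + y^5/7776000 - y^6/622080000).
  { assert (0 <= y^2) by nra. assert (0 <= y^3) by nra. assert (0 <= y^5) by nra.
    nra. }
  assert (x - s - s * (g/3 + g^2/10) = x^5 * (1/120 + y/240 - 53*y^2/51840
            + 49*y^3/518400 - 49*y^4/10368000 + y^5/7776000 - y^6/622080000)).
  { unfold s, g, y; field. }
  assert (0 < x^5) by (apply pow_lt; lra).
  nra.
Qed.

Lemma sub_sin_le_sin_mul_one_sub_cos x : 0 < x <= PI/2 ->
  x - sin x <= 3/5 * sin x * (1 - cos x).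
Proof.
  intros [x0 xpi].
  pose proof PI_4.
  assert (x2 := sqr_le_of_le_half_pi x ltac:(lra)).
  destruct (sin_taylor_bounds x ltac:(lra)) as [sin_lb _].
  destruct (cos_taylor_bounds x ltac:(lra)) as [_ cos_ub].
  assert (one_sub_cos_ge0 : 1 - cos x >= 0) by (pose proof (COS_bound x); lra).
  set (s := x - x^3/6 + x^5/120 - x^7/5040) in *.
  set (g := x^2/2 - x^4/24 + x^6/720 - x^8/40320).
  assert (s0 : 0 <= s).
  { pose proof (sin_lb_ge_0 x) as h; rewrite sin_lb_expand in h; apply h; lra. }
  assert (g_cos : g <= 1 - cos x) by (unfold g; lra).
  assert (s * g <= sin x * (1 - cos x)) by nra.
  set (y := x^2) in *.
  assert (y0 : 0 <= y) by (unfold y; nra).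
  assert (margin : 0 < 2/15 - y/15 + 23*y^2/3150 - 17*y^3/40320
                     + 29*y^4/2016000 - y^5/3456000 + y^6/338688000).
  { assert (0 <= y^2) by nra. assert (0 <= y^3) by nra.
    assert (0 <= y^4) by nra. assert (0 <= y^6) by nra.
    nra. }
  assert (3/5 * s * g - (x - s) = x^3 * (2/15 - y/15 + 23*y^2/3150
            - 17*y^3/40320 + 29*y^4/2016000 - y^5/3456000 + y^6/338688000)).
  { unfold s, g, y; field. }
  assert (0 < x^3) by (apply pow_lt; lra).
  nra.
Qed.

Lemma cos_double_half x : cos x = 1 - 2 * sin (x/2)^2.
Proof. replace x with (2 * (x/2)) at 1 by field; rewrite cos_2a_sin; ring. Qed.

Lemma sin_half_sqr_bounds x : 0 < x <= PI/2 -> 0 < sin (x/2)^2 <= 1/2.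
Proof.
  intros [x0 xpi]; pose proof PI_RGT_0.
  assert (0 < sin (x/2)) by (apply sin_gt_0; lra).
  assert (0 <= cos x) by (apply cos_ge_0; lra).
  rewrite cos_double_half in *; nra.
Qed.

Lemma div_sin_sub1_bounds x : 0 < x <= PI/2 ->
  2 * sin (x/2)^2 / 3 + 2 * (sin (x/2)^2)^2 / 5 <= x / sin x - 1 <=
  6 * sin (x/2)^2 / 5.
Proof.
  intros hx.
  assert (lower := sin_mul_one_sub_cos_le_sub_sin x hx).
  assert (upper := sub_sin_le_sin_mul_one_sub_cos x hx).
  assert (sin_pos : 0 < sin x)
    by (destruct hx; pose proof PI_RGT_0; apply sin_gt_0; lra).
  rewrite cos_double_half in lower, upper.
  assert (e_mul : (x / sin x - 1) * sin x = x - sin x) by (field; lra).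
  split; apply Rmult_le_reg_r with (sin x); rewrite ?e_mul; nra.
Qed.

Definition quad_form (d v : R) : R := 6 * d^2 + 8 * d * v + 6 * v^2.

Lemma eq1_half_angle alpha d v :
  eq1 alpha d (cos (alpha/2) * v) =
  cos (alpha/2)^2 * quad_form d v - 10 * (1 + alpha / sin alpha).
Proof.
  unfold eq1, quad_form, csc.
  rewrite cos_double_half, <- (sin2_cos2 (alpha/2)); unfold Rsqr, Rdiv; ring.
Qed.

Lemma eq2_half_angle alpha d v : cos (alpha/2) <> 0 -> sin (alpha/2) <> 0 ->
  eq2 alpha d (cos (alpha/2) * v) =
  (3 * v - 2 * d * (d^2 - 3))^2 + 21 * d^2
  - 105 * (alpha / sin alpha - 1) / sin (alpha/2)^2.
Proof.
  intros c0 s0; unfold eq2, sec, csc, Rdiv.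
  set (r := alpha * / sin alpha); field; auto.
Qed.

Lemma reduced_parameter_bounds s e D M :
  0 < s <= 1/2 -> 2*s/3 + 2*s^2/5 <= e <= 6*s/5 ->
  D * s = 5 * e -> M * (1 - s) = 10 * (2 + e) ->
  10/3 <= D <= 6 /\ 20 <= M /\ M < 14 * D /\
  M < 6 * D + 16 * D * (D - 3) / 3 + 8 * D * (D - 3)^2 / 3.
Proof.
  intros [s0 s1] [e0 e1] De Me.
  assert (D0 : 10/3 + 2*s <= D) by nra.
  assert (D1 : D <= 6) by nra.
  assert (Ms : M * (1 - s) = 20 + 2 * D * s) by lra.
  assert (M0 : 0 < M) by nra.
  assert (M20 : 20 <= M) by nra.
  assert (M14 : M < 14 * D).
  { apply Rmult_lt_reg_r with (1 - s); [lra|]. nra. }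
  assert (F : 70 * D / 9 + 32 * D * s / 3 <=
              6 * D + 16 * D * (D - 3) / 3 + 8 * D * (D - 3)^2 / 3).
  { assert (0 <= D * (D - 3)^2) by (apply Rmult_le_pos; nra). nra. }
  split; [lra|]; split; [lra|]; split; [lra|].
  apply Rmult_lt_reg_r with (1 - s); [lra|]. nra.
Qed.

Lemma sqrt21_sqr : sqrt 21 * sqrt 21 = 21.
Proof. apply sqrt_sqrt; lra. Qed.

Lemma sqrt21_bounds : 458/100 <= sqrt 21 <= 459/100.
Proof. pose proof sqrt21_sqr; pose proof (sqrt_pos 21); nra. Qed.

Definition ellipse_d (z t : R) : R := z * (2 * t) / (1 + t^2).
Definition ellipse_w (z t : R) : R := - sqrt 21 * z * (1 - t^2) / (1 + t^2).

Lemma ellipse_eq z t : ellipse_w z t ^ 2 + 21 * ellipse_d z t ^ 2 = 21 * z ^ 2.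
Proof.
  unfold ellipse_w, ellipse_d; assert (0 < 1 + t^2) by nra.
  pose proof sqrt21_sqr as h21; set (q := sqrt 21) in *; rewrite <- h21.
  field; lra.
Qed.

Lemma ellipse_d_increasing z a b : 0 < z -> 0 <= a -> a < b -> b <= 1 ->
  ellipse_d z a < ellipse_d z b.
Proof.
  intros z0 a0 ab b1; unfold ellipse_d.
  assert (0 < 1 + a^2) by nra; assert (0 < 1 + b^2) by nra.
  apply Rlt_0_minus.
  replace (z * (2 * b) / (1 + b^2) - z * (2 * a) / (1 + a^2))
    with (2 * z * (b - a) * (1 - a * b) / ((1 + a^2) * (1 + b^2))) by (field; lra).
  apply Rdiv_lt_0_compat; [|nra].
  assert (a * b < 1) by nra.
  repeat apply Rmult_lt_0_compat; lra.
Qed.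

Definition ellipse_v (z t : R) : R :=
  (ellipse_w z t + 2 * ellipse_d z t * (ellipse_d z t ^ 2 - 3)) / 3.

Definition ellipse_form (z t : R) : R := quad_form (ellipse_d z t) (ellipse_v z t).

Lemma ellipse_form_0 z : ellipse_form z 0 = 14 * z^2.
Proof.
  unfold ellipse_form, quad_form, ellipse_v, ellipse_w, ellipse_d.
  pose proof sqrt21_sqr as h21; set (q := sqrt 21) in *.
  replace 14 with (2/3 * 21) by field; rewrite <- h21; field.
Qed.

Lemma ellipse_form_1 z : ellipse_form z 1 =
  6 * z^2 + 16 * z^2 * (z^2 - 3) / 3 + 8 * z^2 * (z^2 - 3)^2 / 3.
Proof. unfold ellipse_form, quad_form, ellipse_v, ellipse_w, ellipse_d; field. Qed.

(* At t = 53/100 the point of the ellipse is d = k z, w = -sqrt 21 m z with the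
   rational point k = 10600/12809, m = 7191/12809 of the unit circle. *)
Lemma ellipse_form_mid z : 0 <= z -> 10/3 <= z^2 <= 6 ->
  ellipse_form z (53/100) < 20.
Proof.
  intros z0 [zlo zhi].
  pose proof sqrt21_bounds; pose proof sqrt21_sqr as h21.
  set (k := 10600/12809); set (m := 7191/12809).
  set (Z := z^2) in *.
  assert (E : ellipse_form z (53/100) =
    6*k^2*Z + 16*k^2/3*Z*(k^2*Z-3) + 2/3*(m^2*21*Z + 4*k^2*Z*(k^2*Z-3)^2)
    - sqrt 21 * (8*k*m/3) * (Z*(k^2*Z-2))).
  { unfold ellipse_form, quad_form, ellipse_v, ellipse_w, ellipse_d, Z, k, m.
    set (q := sqrt 21) in *; rewrite <- h21; field. }
  rewrite E.
  assert (W : 0 <= Z*(k^2*Z-2)) by (unfold k; nra).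
  assert (458/100*(8*k*m/3)*(Z*(k^2*Z-2)) <= sqrt 21*(8*k*m/3)*(Z*(k^2*Z-2))).
  { apply Rmult_le_compat_r; [exact W|].
    apply Rmult_le_compat_r; [unfold k, m; lra|lra]. }
  assert (6*k^2*Z + 16*k^2/3*Z*(k^2*Z-3) + 2/3*(m^2*21*Z + 4*k^2*Z*(k^2*Z-3)^2)
          - 458/100*(8*k*m/3)*(Z*(k^2*Z-2)) < 20).
  { unfold k, m. assert (0 <= (Z - 10/3)*(6-Z)) by nra. nra. }
  lra.
Qed.

Lemma ellipse_form_continuous z : continuity (ellipse_form z).
Proof.
  intro t; assert (0 < 1 + t^2) by nra.
  unfold ellipse_form, quad_form, ellipse_v, ellipse_w, ellipse_d.
  reg; apply Rgt_not_eq; nra.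
Qed.

Lemma ellipse_form_two_roots z M : 0 < z -> 10/3 <= z^2 <= 6 -> 20 <= M ->
  M < 14 * z^2 ->
  M < 6 * z^2 + 16 * z^2 * (z^2 - 3) / 3 + 8 * z^2 * (z^2 - 3)^2 / 3 ->
  exists t1 t2, 0 < t1 < t2 /\ t2 <= 1 /\
    ellipse_form z t1 = M /\ ellipse_form z t2 = M.
Proof.
  intros z0 zb M20 M0 M1.
  set (f t := ellipse_form z t - M).
  assert (f_cont : continuity f).
  { apply continuity_minus; [apply ellipse_form_continuous|].
    apply continuity_const; now intros ? ?. }
  assert (f0 : 0 < f 0) by (unfold f; rewrite ellipse_form_0; lra).
  assert (f1 : 0 < f 1) by (unfold f; rewrite ellipse_form_1; lra).
  assert (fmid : f (53/100) < 0).
  { unfold f; pose proof (ellipse_form_mid z ltac:(lra) zb); lra. }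
  destruct (IVT_cor f 0 (53/100) f_cont) as (t1 & t1b & ft1); [lra | nra |].
  destruct (IVT_cor f (53/100) 1 f_cont) as (t2 & t2b & ft2); [lra | nra |].
  assert (t1 <> 0) by (intros ->; lra).
  assert (t1 <> 53/100) by (intros ->; lra).
  assert (t2 <> 53/100) by (intros ->; lra).
  exists t1, t2; unfold f in ft1, ft2; repeat split; lra.
Qed.

Lemma is_solution_ellipse alpha z t : 0 < alpha <= PI/2 ->
  z^2 * sin (alpha/2)^2 = 5 * (alpha / sin alpha - 1) ->
  cos (alpha/2)^2 * ellipse_form z t = 10 * (1 + alpha / sin alpha) ->
  is_solution alpha (ellipse_d z t) (cos (alpha/2) * ellipse_v z t).
Proof.
  intros [a0 a1] z2 Q; unfold ellipse_form in Q.
  pose proof PI_RGT_0.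
  assert (c0 : 0 < cos (alpha/2)) by (apply cos_gt_0; lra).
  assert (s0 : 0 < sin (alpha/2)) by (apply sin_gt_0; lra).
  split.
  - rewrite eq1_half_angle; lra.
  - rewrite eq2_half_angle by lra.
    replace (3 * ellipse_v z t - 2 * ellipse_d z t * (ellipse_d z t ^ 2 - 3))
      with (ellipse_w z t) by (unfold ellipse_v; field).
    rewrite ellipse_eq.
    replace (alpha / sin alpha - 1) with (z^2 * sin (alpha/2)^2 / 5) by lra.
    field; lra.
Qed.

Theorem lemma4 (alpha : R) (Ha : 0 < alpha <= PI / 2) :
  exists d1 u1 d2 u2 : R,
    (d1, u1) <> (d2, u2) /\
    0 < d1 /\ is_solution alpha d1 u1 /\
    0 < d2 /\ is_solution alpha d2 u2.
Proof.
  assert (s_bounds := sin_half_sqr_bounds alpha Ha).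
  assert (e_bounds := div_sin_sub1_bounds alpha Ha).
  set (s := sin (alpha/2)^2) in *; set (e := alpha / sin alpha - 1) in *.
  set (D := 5 * e / s); set (M := 10 * (2 + e) / (1 - s)).
  assert (De : D * s = 5 * e) by (unfold D; field; lra).
  assert (Me : M * (1 - s) = 10 * (2 + e)) by (unfold M; field; lra).
  destruct (reduced_parameter_bounds s e D M s_bounds e_bounds De Me)
    as (Db & M20 & M0 & M1).
  set (z := sqrt D).
  assert (z2 : z^2 = D) by (unfold z; rewrite <- Rsqr_pow2; apply Rsqr_sqrt; lra).
  assert (z0 : 0 < z) by (apply sqrt_lt_R0; lra).
  rewrite <- z2 in Db, M0, M1, De.
  destruct (ellipse_form_two_roots z M z0 Db M20 M0 M1)
    as (t1 & t2 & t12 & t2le & Q1 & Q2).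
  assert (cM : cos (alpha/2)^2 * M = 10 * (1 + alpha / sin alpha)).
  { assert (cos (alpha/2)^2 = 1 - s)
      by (pose proof (sin2_cos2 (alpha/2)); unfold Rsqr, s in *; lra).
    unfold e in Me; nra. }
  exists (ellipse_d z t1), (cos (alpha/2) * ellipse_v z t1),
         (ellipse_d z t2), (cos (alpha/2) * ellipse_v z t2).
  assert (d1_pos : 0 < ellipse_d z t1).
  { replace 0 with (ellipse_d z 0) by (unfold ellipse_d; field; lra).
    apply ellipse_d_increasing; lra. }
  assert (d12 : ellipse_d z t1 < ellipse_d z t2)
    by (apply ellipse_d_increasing; lra).
  split; [intros [= d_eq _]; lra|].
  split; [exact d1_pos|]; split; [apply is_solution_ellipse; try rewrite Q1; auto|].
  split; [lra|]; apply is_solution_ellipse; try rewrite Q2; auto.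
Qed.
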